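(* Let $\mathcal{D}_{ES}=\{(\alpha,\kappa):0<\alpha<1,\ \kappa>0\}$ and $\mathcal{D}_{LS}=\{(\mathbb{W},\hat\kappa):\mathbb{W}\in\mathbb{R},\ \hat\kappa>0\}$, and define $\mathcal{H}^*_{ES}=\{\mathcal{P}^*_0:\mathcal{P}^*_0 \text{ solves } \text{EW-ES}_{t_0}(\alpha,\kappa)\text{ for some }(\alpha,\kappa)\in\mathcal{D}_{ES}\}$ and $\mathcal{H}^*_{LS}=\{\mathcal{P}^*_0:\mathcal{P}^*_0 \text{ solves } \text{EW-LS}_{t_0}(\mathbb{W},\hat\kappa)\text{ for some }(\mathbb{W},\hat\kappa)\in\mathcal{D}_{LS}\}$. Then $\mathcal{H}^*_{ES}\subseteq\mathcal{H}^*_{LS}$.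
   Context: Decumulation problem on horizon $[0,T]$. Two assets: a stock index and a bond index; $S_t$, $B_t$ denote the real amounts invested, $W_t=S_t+B_t$. Between rebalancing times they evolve without control as jump diffusions $\frac{dS_t}{S_{t^-}}=(\mu^s-\lambda^s\gamma^s)dt+\sigma^s dZ^s+d\big(\sum_{i=1}^{\pi^s_t}(\xi^s_i-1)\big)$, $\frac{dB_t}{B_{t^-}}=(\mu^b-\lambda^b\gamma^b+\mu^b_c\mathbf 1_{\{B_{t^-}<0\}})dt+\sigma^b dZ^b+d\big(\sum_{i=1}^{\pi^b_t}(\xi^b_i-1)\big)$, where $\pi^s,\pi^b$ are Poisson processes with intensities $\lambda^s,\lambda^b$, $\log\xi^{s},\log\xi^b$ are i.i.d. double-exponential jump sizes, $\gamma^{s}=E[\xi^s-1]$, $\gamma^b=E[\xi^b-1]$, $dZ^s dZ^b=\rho_{sb}dt$, and the jump processes are independent of each other and of the Brownian motions. Rebalancing times $t_0=0<t_1<\dots<t_M=T$, equally spaced. At each $t_i$ the investor withdraws $\mathfrak{q}_i$, so $W(t_i^+)=W(t_i^-)-\mathfrak{q}_i$, then sets $S(t_i^+)=\mathfrak{p}_iW(t_i^+)$, $B(t_i^+)=(1-\mathfrak{p}_i)W(t_i^+)$. Controls $(\mathfrak{q}_i,\mathfrak{p}_i)$ are feedback functions of the state $(S(t_i^-),B(t_i^-))$ and $t_i$. Admissibility: for $i<M$, $\mathfrak{q}_i\in[\mathfrak{q}_{\min},\mathfrak{q}_{\max}]$ if $W_i^-\ge\mathfrak{q}_{\max}$ and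 $\mathfrak{q}_i\in[\mathfrak{q}_{\min},\max(\mathfrak{q}_{\min},W_i^-)]$ if $W_i^-<\mathfrak{q}_{\max}$; $\mathfrak{q}_M=0$; $\mathfrak{p}_i\in[0,1]$ if $W_i^+>0$ and $i<M$, $\mathfrak{p}_i=0$ if $W_i^+\le 0$ or $i=M$. $\mathcal{A}$ is the set of admissible controls $\mathcal{P}_0=\{(\mathfrak{q}_i,\mathfrak{p}_i)\}_{i=0}^M$. $E_{\mathcal{P}_0}^{(s,b),t_0^-}$ is expectation under control $\mathcal{P}_0$ given initial state $(S(t_0^-),B(t_0^-))=(s,b)$; $W_T$ is terminal wealth; $\epsilon$ is a fixed real stabilization constant. $\text{EW-LS}_{t_0}(\mathbb{W},\hat\kappa)$: $\sup_{\mathcal{P}_0\in\mathcal{A}} E_{\mathcal{P}_0}^{(s,b),t_0^-}\big[\sum_{i=0}^M\mathfrak{q}_i+\hat\kappa\min(W_T-\mathbb{W},0)+\epsilon W_T\big]$. $\text{EW-ES}_{t_0}(\alpha,\kappa)$: $\sup_{\mathcal{P}_0\in\mathcal{A}} E_{\mathcal{P}_0}^{(s,b),t_0^-}\big[\sum_{i=0}^M\mathfrak{q}_i+\kappa\sup_{W'}\big(W'+\tfrac1\alpha\min(W_T-W',0)\big)+\epsilon W_T\big]$, equivalently $\sup_{W'}\sup_{\mathcal{P}_0}E[\sum\mathfrak{q}_i+\kappa(W'+\tfrac1\alpha\min(W_T-W',0))+\epsilon W_T]$; for each $(\alpha,\kappa)$ the maximizing $W'$ (denoted $\mathbb{W}^*$)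 is assumed to exist. *)

From HB Require Import structures.
From mathcomp Require Import all_boot all_order all_algebra.
From mathcomp Require Import all_classical all_reals all_analysis.
Set Implicit Arguments. Unset Strict Implicit. Unset Printing Implicit Defensive.
Import Order.TTheory GRing.Theory Num.Theory.
Local Open Scope classical_set_scope.
Local Open Scope ring_scope.

(* Rebalancing times t_0 < ... < t_M.
   Between t_i^+ and t_{i+1}^- the (uncontrolled) dynamics multiply the stock
   amount by the random gross return [rs i] and the bond amount by the random
   gross return [rb i] (lending, B >= 0) or [rbc i] (borrowing, B < 0; this
   accounts for the borrowing spread mu_c^b). *)

Section Decumulation.
Context {d : measure_display} {T : measurableType d} {R : realType}.
Variable (P : probability T R).
Variable (M : nat) (rs rb rbc : nat -> T -> R) (qmin qmax : R).

(* A feedback control: (withdrawal rule q, stock-fraction rule p), each a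
   function of the rebalancing index i (i.e. of t_i) and of the state
   (S(t_i^-), B(t_i^-)). *)
Definition control := ((nat -> R -> R -> R) * (nat -> R -> R -> R))%type.

Definition step (C : control) (i : nat) (st : R * R) (w : T) : R * R :=
  let q := C.1 i st.1 st.2 in
  let Wp := st.1 + st.2 - q in
  let pp := C.2 i st.1 st.2 in
  let Sp := pp * Wp in
  let Bp := (1 - pp) * Wp in
  (Sp * rs i w, Bp * (if Bp < 0 then rbc i w else rb i w)).

(* state C s b n w = (S(t_n^-), B(t_n^-)) from initial state (s, b). *)
Fixpoint state (C : control) (s b : R) (n : nat) (w : T) : R * R :=
  match n with
  | 0 => (s, b)
  | n'.+1 => step C n' (state C s b n' w) w
  end.

Definition withdrawal (C : control) (s b : R) (i : nat) (w : T) : R :=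
  C.1 i (state C s b i w).1 (state C s b i w).2.

Definition total_withdrawal (C : control) (s b : R) (w : T) : R :=
  \sum_(i < M.+1) withdrawal C s b i w.

Definition terminal_wealth (C : control) (s b : R) (w : T) : R :=
  (state C s b M w).1 + (state C s b M w).2 - withdrawal C s b M w.

Definition admissible_rule (C : control) : Prop :=
  forall (i : nat) (x y : R),
    let W := x + y in
    let q := C.1 i x y in
    let pp := C.2 i x y in
    ((i < M)%N ->
       (qmax <= W -> qmin <= q <= qmax) /\
       (W < qmax -> qmin <= q <= Num.max qmin W) /\
       (0 < W - q -> 0 <= pp <= 1) /\
       (W - q <= 0 -> pp = 0)) /\
    (i = M -> q = 0 /\ pp = 0).

(* Admissible controls: the constraints above, and the expectations in the
   objectives are well defined (withdrawals and terminal wealth integrable). *)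
Definition admissible (s b : R) (C : control) : Prop :=
  admissible_rule C /\
  P.-integrable setT (EFin \o terminal_wealth C s b) /\
  (forall i, (i <= M)%N -> P.-integrable setT (EFin \o withdrawal C s b i)).

Definition obj_LS (eps : R) (s b : R) (W khat : R) (C : control) : \bar R :=
  (\int[P]_w ((total_withdrawal C s b w
               + khat * Num.min (terminal_wealth C s b w - W) 0
               + eps * terminal_wealth C s b w)%:E))%E.

Definition obj_ES (eps : R) (s b : R) (alpha kappa W' : R) (C : control)
  : \bar R :=
  (\int[P]_w ((total_withdrawal C s b w
               + kappa * (W' + alpha^-1 * Num.min (terminal_wealth C s b w - W') 0)
               + eps * terminal_wealth C s b w)%:E))%E.

Definition solves_LS (eps s b W khat : R) (C : control) : Prop :=
  admissible s b C /\
  forall C', admissible s b C' -> (obj_LS eps s b W khat C' <= obj_LS eps s b W khat C)%E.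

(* C solves EW-ES_{t0}(alpha, kappa) = sup_{W'} sup_{C} obj_ES(W', C):
   together with a maximizing W* (assumed to exist), (W*, C) attains the sup. *)
Definition solves_ES (eps s b alpha kappa : R) (C : control) : Prop :=
  admissible s b C /\
  exists Wstar : R, forall (W' : R) (C' : control), admissible s b C' ->
    (obj_ES eps s b alpha kappa W' C' <= obj_ES eps s b alpha kappa Wstar C)%E.

Definition H_ES (eps s b : R) : set control :=
  [set C | exists alpha kappa : R,
      0 < alpha < 1 /\ 0 < kappa /\ solves_ES eps s b alpha kappa C].

Definition H_LS (eps s b : R) : set control :=
  [set C | exists W khat : R, 0 < khat /\ solves_LS eps s b W khat C].

End Decumulation.

From HB Require Import structures.
From mathcomp Require Import all_boot all_order all_algebra.
From mathcomp Require Import all_classical all_reals all_analysis.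
From mathcomp Require Import ring lra.
Import Order.TTheory GRing.Theory Num.Theory.
Local Open Scope classical_set_scope.
Local Open Scope ring_scope.

(** For a fixed threshold [W'], the EW-ES integrand is the EW-LS integrand
    with threshold [W'] and weight [kappa / alpha], shifted by the constant
    [kappa * W'].  Since expectation under a probability commutes with adding
    a constant, the two objectives differ by [kappa * W'] on every admissible
    control.  An EW-ES optimum [(W*, C)] maximises the EW-ES objective at
    [W*] over all controls, hence [C] maximises EW-LS with [(W*, kappa / alpha)],
    and [kappa / alpha > 0]. *)

Section integration.
Context {d : measure_display} {T : measurableType d} {R : realType}.

Lemma Lfun_min0 (mu : {measure set T -> \bar R}) (f : T -> R) :
  f \in Lfun mu 1 -> (fun x => Num.min (f x) 0) \in Lfun mu 1.
Proof.
move=> lf.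
have -> : (fun x => Num.min (f x) 0) = 2^-1 *: (f - (fun x => `|f x|)).
  apply/funext => x; rewrite !fctE /=.
  change (Num.min (f x) 0 = 2^-1 * (f x - `|f x|)).
  by have [f0|f0] := leP (f x) 0; [rewrite ler0_norm|rewrite gtr0_norm]; lra.
by rewrite rpredZ // rpredB // Lfun_norm.
Qed.

Lemma integralDr_cst (P : probability T R) (f : T -> R) (c : R) :
  P.-integrable setT (EFin \o f) ->
  (\int[P]_x (f x + c)%:E = \int[P]_x (f x)%:E + c%:E)%E.
Proof.
move=> intf.
have intc : P.-integrable setT (EFin \o cst c).
  exact: finite_measure_integrable_cst.
under eq_integral do rewrite EFinD.
rewrite (integralD measurableT intf intc); congr (_ + _)%E.
by rewrite (eq_integral (cst c%:E)) // integral_cst //= probability_setT mule1.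
Qed.

End integration.

Section decumulation.
Context {d : measure_display} {T : measurableType d} {R : realType}.
Variables (P : probability T R) (M : nat) (rs rb rbc : nat -> T -> R).
Variables (qmin qmax eps s b : R).

Definition reward_LS (W khat : R) (C : @control R) (w : T) : R :=
  total_withdrawal M rs rb rbc C s b w
  + khat * Num.min (terminal_wealth M rs rb rbc C s b w - W) 0
  + eps * terminal_wealth M rs rb rbc C s b w.

Lemma obj_LSE (W khat : R) (C : @control R) :
  obj_LS P M rs rb rbc eps s b W khat C =
  (\int[P]_w (reward_LS W khat C w)%:E)%E.
Proof. by []. Qed.

Lemma Lfun_reward_LS (W khat : R) (C : @control R) :
  admissible P M rs rb rbc qmin qmax s b C -> reward_LS W khat C \in Lfun P 1.
Proof.
move=> [_ [/Lfun1_integrable intW intq]].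
have intTW : total_withdrawal M rs rb rbc C s b \in Lfun P 1.
  rewrite /total_withdrawal -fct_sumE rpred_sum // => i _.
  by apply/Lfun1_integrable/intq; rewrite -ltnS.
have intmin : (fun w => Num.min (terminal_wealth M rs rb rbc C s b w - W) 0)
    \in Lfun P 1.
  by apply: Lfun_min0; rewrite rpredB // Lfun_cst.
by rewrite !rpredD //; [exact: (rpredZ khat intmin)|exact: (rpredZ eps intW)].
Qed.

Lemma obj_ES_LS (alpha kappa W : R) (C : @control R) :
  admissible P M rs rb rbc qmin qmax s b C ->
  obj_ES P M rs rb rbc eps s b alpha kappa W C =
  (obj_LS P M rs rb rbc eps s b W (kappa / alpha) C + (kappa * W)%:E)%E.
Proof.
move=> adm; rewrite obj_LSE -integralDr_cst; last first.
  exact/Lfun1_integrable/(Lfun_reward_LS _ _ _ adm).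
by apply: eq_integral => w _; congr EFin; rewrite /reward_LS; ring.
Qed.

Lemma solves_ES_LS (alpha kappa : R) (C : @control R) :
  solves_ES P M rs rb rbc qmin qmax eps s b alpha kappa C ->
  exists W, solves_LS P M rs rb rbc qmin qmax eps s b W (kappa / alpha) C.
Proof.
move=> [adm [Wstar opt]]; exists Wstar; split => // C' adm'.
by have := opt Wstar C' adm'; rewrite !obj_ES_LS // leeD2rE.
Qed.

End decumulation.

Theorem corollary1 (d : measure_display) (T : measurableType d) (R : realType)
  (P : probability T R) (M : nat) (rs rb rbc : nat -> T -> R)
  (qmin qmax eps s b : R)
  (hM : (0 < M)%N) (hq : qmin <= qmax)
  (hrpos : forall i w, 0 < rs i w /\ 0 < rb i w /\ 0 < rbc i w)
  (hrmeas : forall i, measurable_fun setT (rs i) /\ measurable_fun setT (rb i)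
                      /\ measurable_fun setT (rbc i)) :
  H_ES P M rs rb rbc qmin qmax eps s b `<=` H_LS P M rs rb rbc qmin qmax eps s b.
Proof.
move=> C [alpha [kappa [/andP[alpha0 _] [kappa0 /solves_ES_LS [W optLS]]]]].
by exists W, (kappa / alpha); split => //; exact: divr_gt0.
Qed.
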